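(* Let $f\in C^1[0,1]$ with $f(0)=0$, $h:=f'$, and $q$ satisfying (q). Then (i) $\beta(c_2)<\beta(c_1)$ for all $c_2>c_1>c^*$; (ii) $\beta(c)\to-\infty$ as $c\to+\infty$.
   Context: Condition (q): $q\in C[0,1]$, $q>0$ on $(0,1)$, $q(0)=q(1)=0$, and $\limsup_{\varphi\to0^+}q(\varphi)/\varphi<+\infty$. For $c\in\mathbb R$, a solution of problem $(P_c)$ is a function $z\in C[0,1]\cap C^1(0,1)$ with $\dot z(\varphi)=h(\varphi)-c-q(\varphi)/z(\varphi)$ and $z(\varphi)<0$ for all $\varphi\in(0,1)$, and $z(0)=0$. A solution of $(P^{00}_c)$ is a solution of $(P_c)$ which also satisfies $z(1)=0$. $c^*$ denotes the real number such that $(P^{00}_c)$ has a solution iff $c\ge c^*$ (that solution being unique). For $c>c^*$, $\beta(c)<0$ denotes the number such that, for $b<0$, $(P_c)$ has a solution with $z(1)=b$ iff $b\ge\beta(c)$. *)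

From Stdlib Require Import Reals.
From Coquelicot Require Import Coquelicot.
Open Scope R_scope.

Definition cont_on_01 (g : R -> R) : Prop :=
  forall x, 0 <= x <= 1 ->
    filterlim g (within (fun y => 0 <= y <= 1) (locally x)) (locally (g x)).

Definition C1_01 (f h : R -> R) : Prop :=
  (forall x, 0 <= x <= 1 ->
     filterlim (fun y => (f y - f x) / (y - x))
       (within (fun y => 0 <= y <= 1 /\ y <> x) (locally x)) (locally (h x)))
  /\ cont_on_01 h.

Definition cond_q (q : R -> R) : Prop :=
  cont_on_01 q /\
  (forall x, 0 < x < 1 -> 0 < q x) /\
  q 0 = 0 /\ q 1 = 0 /\
  (* limsup_{phi -> 0+} q(phi)/phi < +oo *)
  (exists M delta, 0 < delta /\ forall x, 0 < x < delta -> q x / x <= M).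

Definition sol_P (h q : R -> R) (c : R) (z : R -> R) : Prop :=
  cont_on_01 z /\
  (forall x, 0 < x < 1 -> ex_derive z x /\ continuous (Derive z) x) /\
  (forall x, 0 < x < 1 -> Derive z x = h x - c - q x / z x) /\
  (forall x, 0 < x < 1 -> z x < 0) /\
  z 0 = 0.

Definition sol_P00 (h q : R -> R) (c : R) (z : R -> R) : Prop :=
  sol_P h q c z /\ z 1 = 0.

(* Both claims follow from the linear drop estimate (lemma [beta_drop])
       beta(c') <= beta(c) - (c' - c)        for c* < c < c'.
   Let z solve (P_c) with z(1) = beta(c) and u solve (P_c') with u(1) = beta(c').
   If y0 := beta(c) - (c' - c) were below beta(c'), integrate the equation of
   (P_c') backwards from y(1) = y0, with z replaced by min(z, u) so that the
   right-hand side is globally Lipschitz on every strip [d,1] x R.  A comparison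
   principle traps y between z - (c' - c) x and u on (0,1]; hence the truncation
   is inactive, y is negative and vanishes at 0+, so y solves (P_c') with
   y(1) = y0 < beta(c'), contradicting the definition of beta(c'). *)

From Stdlib Require Import Reals Lra.
From Coquelicot Require Import Coquelicot.
Open Scope R_scope.

Lemma continuous_Rminus (f g : R -> R) x :
  continuous f x -> continuous g x -> continuous (fun y => f y - g y) x.
Proof. intros Hf Hg. apply (continuous_minus f g); auto. Qed.

Lemma continuous_Rmult (f g : R -> R) x :
  continuous f x -> continuous g x -> continuous (fun y => f y * g y) x.
Proof. intros Hf Hg. apply (continuous_mult f g); auto. Qed.

Lemma continuous_Rdiv (f g : R -> R) x :
  continuous f x -> continuous g x -> g x <> 0 -> continuous (fun y => f y / g y) x.
Proof.
  intros Hf Hg Hg0. apply continuous_Rmult; auto. apply continuous_Rinv_comp; auto.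
Qed.

Lemma is_derive_Rminus (f g : R -> R) x a b :
  is_derive f x a -> is_derive g x b -> is_derive (fun t => f t - g t) x (a - b).
Proof. intros Ha Hb. apply (is_derive_minus f g); auto. Qed.

(* [Rmin u v = (u + v - |u - v|) / 2], hence [Rmin] is continuous. *)
Lemma continuous_Rmin (f g : R -> R) x :
  continuous f x -> continuous g x -> continuous (fun y => Rmin (f y) (g y)) x.
Proof.
  intros Hf Hg.
  apply continuous_ext with (f := fun y => (f y + g y - Rabs (f y - g y)) * / 2).
  { intros y. unfold Rmin. destruct (Rle_dec (f y) (g y)).
    - rewrite Rabs_left1 by lra. lra.
    - rewrite Rabs_right by lra. lra. }
  apply continuous_Rmult; [| apply continuous_const].
  apply continuous_Rminus; [apply (continuous_plus f g); auto |].
  apply continuous_Rabs_comp, continuous_Rminus; auto.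
Qed.

Lemma Rmin_lipschitz v w u : Rabs (Rmin v u - Rmin w u) <= Rabs (v - w).
Proof. unfold Rmin; repeat destruct Rle_dec; unfold Rabs; repeat destruct Rcase_abs; lra. Qed.

(* The retraction of R onto [0,1]; composing with it extends a function
   continuous on [0,1] to a function continuous on all of R. *)
Definition clamp01 (x : R) : R := (Rabs x - Rabs (x - 1) + 1) / 2.

Lemma clamp01_range x : 0 <= clamp01 x <= 1.
Proof. unfold clamp01, Rabs; repeat destruct Rcase_abs; lra. Qed.

Lemma clamp01_id x : 0 <= x <= 1 -> clamp01 x = x.
Proof. intros Hx. unfold clamp01, Rabs; repeat destruct Rcase_abs; lra. Qed.

Lemma clamp01_pos x : 0 < x -> 0 < clamp01 x.
Proof. intros Hx. unfold clamp01, Rabs; repeat destruct Rcase_abs; lra. Qed.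

Lemma continuous_clamp01 x : continuous clamp01 x.
Proof.
  unfold clamp01. apply continuous_Rdiv; [| apply continuous_const | lra].
  apply (continuous_plus (fun y => Rabs y - Rabs (y - 1)) (fun _ => 1));
    [| apply continuous_const].
  apply continuous_Rminus; [apply continuous_Rabs |].
  apply continuous_Rabs_comp, continuous_Rminus; [apply continuous_id | apply continuous_const].
Qed.

Lemma cont_on_01_clamp (g : R -> R) :
  cont_on_01 g -> forall x, continuous (fun y => g (clamp01 y)) x.
Proof.
  intros Hg x P HP.
  specialize (Hg (clamp01 x) (clamp01_range x) P HP).
  apply (continuous_clamp01 x) in Hg. unfold filtermap in Hg |- *.
  eapply filter_imp; [| exact Hg]. intros y Hy. apply Hy, clamp01_range.
Qed.

Lemma continuous_eps (g : R -> R) x : continuous g x -> forall eps, 0 < eps ->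
  exists del, 0 < del /\ forall y, Rabs (y - x) < del -> Rabs (g y - g x) < eps.
Proof.
  intros Hc eps He.
  destruct (proj1 (@filterlim_locally R_UniformSpace R_UniformSpace (locally x) _ g (g x))
              Hc (mkposreal _ He)) as [del Hd].
  exists del. split; [apply cond_pos |]. intros y Hy. apply (Hd y). exact Hy.
Qed.

Lemma within_eps (g : R -> R) (D : R -> Prop) x l :
  filterlim g (within D (locally x)) (locally l) <->
  (forall eps, 0 < eps -> exists del, 0 < del /\
     forall s, D s -> Rabs (s - x) < del -> Rabs (g s - l) < eps).
Proof.
  split.
  - intros H eps He. destruct (H (ball l (mkposreal _ He)) (locally_ball _ _)) as [del Hd].
    exists del. split; [apply cond_pos |]. intros s Ds Hs. apply (Hd s); assumption.
  - intros H P [eps HP]. destruct (H eps (cond_pos eps)) as [del [Hdel Hs]].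
    exists (mkposreal _ Hdel). intros s Hsx Ds. apply HP, (Hs s Ds), Hsx.
Qed.

Lemma locally_interval a b x : a < x < b -> locally x (fun t => a < t < b).
Proof.
  intros Hx. assert (Hp : 0 < Rmin (x - a) (b - x)) by (apply Rmin_glb_lt; lra).
  exists (mkposreal _ Hp). intros t Ht.
  cbv [ball] in Ht; simpl in Ht; unfold AbsRing_ball, abs, minus, plus, opp in Ht; simpl in Ht.
  pose proof (Rmin_l (x - a) (b - x)). pose proof (Rmin_r (x - a) (b - x)).
  apply Rabs_lt_between in Ht. lra.
Qed.

Lemma lipschitz_continuous (f : R -> R) d M t : 0 <= M -> d < t ->
  (forall a b, d <= a -> d <= b -> Rabs (f a - f b) <= M * Rabs (a - b)) ->
  continuous f t.
Proof.
  intros HM Ht Hl. apply filterlim_locally. intros eps.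
  assert (Hp : 0 < Rmin (t - d) (eps / (M + 1))).
  { apply Rmin_glb_lt; [lra |]. apply Rdiv_lt_0_compat; [apply cond_pos | lra]. }
  exists (mkposreal _ Hp). intros y Hy.
  cbv [ball] in Hy |- *; simpl in Hy |- *;
    unfold AbsRing_ball, abs, minus, plus, opp in Hy |- *; simpl in Hy |- *.
  fold (y - t) in Hy. fold (f y - f t).
  assert (H1 : Rabs (y - t) < t - d) by (eapply Rlt_le_trans; [exact Hy | apply Rmin_l]).
  assert (H2 : Rabs (y - t) < eps / (M + 1)) by (eapply Rlt_le_trans; [exact Hy | apply Rmin_r]).
  apply Rabs_lt_between in H1.
  eapply Rle_lt_trans; [apply Hl; lra |].
  pose proof (cond_pos eps). pose proof (Rabs_pos (y - t)).
  apply Rmult_lt_compat_r with (r := M + 1) in H2; [| lra].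
  unfold Rdiv in H2. rewrite Rmult_assoc, Rinv_l in H2 by lra. nra.
Qed.

Lemma ex_RInt_pos (f : R -> R) a b : (forall x, 0 < x -> continuous f x) ->
  0 < a -> 0 < b -> ex_RInt f a b.
Proof.
  intros Hf Ha Hb. apply (@ex_RInt_continuous R_CompleteNormedModule).
  intros z [H1 _]. apply Hf. pose proof (Rmin_glb_lt a b 0 Ha Hb). lra.
Qed.

Lemma RInt_lower_derive (f : R -> R) t : (forall x, 0 < x -> continuous f x) -> 0 < t ->
  is_derive (fun a => RInt f a 1) t (- f t).
Proof.
  intros Hf Ht. apply (is_derive_RInt' f (fun a => RInt f a 1) t 1); [| apply Hf; auto].
  apply filter_imp with (fun a => 0 < a < t + 1); [| apply locally_interval; lra].
  intros a Ha. apply (@RInt_correct R_CompleteNormedModule), ex_RInt_pos; auto; lra.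
Qed.

Lemma RInt_lower_diff (f : R -> R) a b : (forall x, 0 < x -> continuous f x) ->
  0 < a -> 0 < b -> RInt f a 1 - RInt f b 1 = RInt f a b.
Proof.
  intros Hf Ha Hb. rewrite <- (@RInt_Chasles R_CompleteNormedModule f a b 1).
  - change (plus ?x ?y) with (x + y). ring.
  - apply ex_RInt_pos; auto.
  - apply ex_RInt_pos; auto; lra.
Qed.

Lemma RInt_Rminus (f g : R -> R) t : (forall x, 0 < x -> continuous f x) ->
  (forall x, 0 < x -> continuous g x) -> 0 < t ->
  RInt f t 1 - RInt g t 1 = RInt (fun s => f s - g s) t 1.
Proof.
  intros Hf Hg Ht. symmetry.
  apply (@RInt_minus R_CompleteNormedModule f g t 1); apply ex_RInt_pos; auto; lra.
Qed.

Lemma RInt_abs_bound (f : R -> R) M a b : (forall x, 0 < x -> continuous f x) ->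
  0 < a -> 0 < b -> (forall x, Rmin a b <= x <= Rmax a b -> Rabs (f x) <= M) ->
  Rabs (RInt f a b) <= M * Rabs (b - a).
Proof.
  intros Hf Ha Hb HM. rewrite Rmult_comm. destruct (Rle_dec a b) as [Hab | Hab].
  - rewrite (Rabs_right (b - a)) by lra. apply abs_RInt_le_const; auto.
    + apply ex_RInt_pos; auto.
    + intros t Ht; apply HM. rewrite Rmin_left, Rmax_right; lra.
  - rewrite <- (@opp_RInt_swap R_CompleteNormedModule f b a) by (apply ex_RInt_pos; auto).
    change (opp ?x) with (- x). rewrite Rabs_Ropp, (Rabs_left (b - a)) by lra.
    replace (- (b - a)) with (a - b) by ring. apply abs_RInt_le_const; [lra | |].
    + apply ex_RInt_pos; auto.
    + intros t Ht; apply HM. rewrite Rmin_right, Rmax_left; lra.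
Qed.

(* The exponential weight used to control Picard iterates. *)
Lemma continuous_exp_weight L K x : continuous (fun s => 2 * L * K * exp (2 * L * (1 - s))) x.
Proof.
  apply (ex_derive_continuous (fun s => 2 * L * K * exp (2 * L * (1 - s)))). auto_derive; auto.
Qed.

(* The weight reproduces itself under [int_t^1], up to the factor [2L]. *)
Lemma RInt_exp_weight L K t :
  RInt (fun s => 2 * L * K * exp (2 * L * (1 - s))) t 1 = K * exp (2 * L * (1 - t)) - K.
Proof.
  rewrite (is_RInt_unique _ t 1 (minus ((fun s => - K * exp (2 * L * (1 - s))) 1)
                                       ((fun s => - K * exp (2 * L * (1 - s))) t))).
  - change (minus ?x ?y) with (x - y). rewrite Rminus_diag, Rmult_0_r, exp_0.
    match goal with |- ?a = ?b => change (@eq R a b) end. ring.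
  - apply (@is_RInt_derive R_CompleteNormedModule (fun s => - K * exp (2 * L * (1 - s)))).
    + intros x _. auto_derive; auto.
      match goal with |- ?a = ?b => change (@eq R a b) end.
      replace (1 + - x) with (1 - x) by ring. ring.
    + intros x _. apply continuous_exp_weight.
Qed.

Lemma half_pow_pos n : 0 < (/ 2) ^ n.
Proof. apply pow_lt; lra. Qed.

Lemma is_lim_seq_geometric_error (u : nat -> R) l K :
  (forall n, Rabs (u n - l) <= K * (/ 2) ^ n) -> is_lim_seq u l.
Proof.
  intros H.
  assert (Hg : is_lim_seq (fun n => K * (/ 2) ^ n) 0).
  { replace 0 with (K * 0) by ring. apply (is_lim_seq_scal_l _ K 0), is_lim_seq_geom.
    rewrite Rabs_right; lra. }
  apply (is_lim_seq_le_le (fun n => l - K * (/ 2) ^ n) u (fun n => l + K * (/ 2) ^ n)).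
  - intros n. specialize (H n). apply Rabs_le_between in H. lra.
  - replace (Finite l) with (Finite (l - 0)) by (f_equal; ring).
    apply is_lim_seq_minus'; [apply is_lim_seq_const | exact Hg].
  - replace (Finite l) with (Finite (l + 0)) by (f_equal; ring).
    apply is_lim_seq_plus'; [apply is_lim_seq_const | exact Hg].
Qed.

Definition strip_bound (F : R -> R -> R) (d M L : R) : Prop :=
  forall s, d <= s <= 1 -> forall v w,
    Rabs (F s v) <= M /\ Rabs (F s v - F s w) <= L * Rabs (v - w).

(* Existence for the backward Cauchy problem [y' = F(t, y)], [y(1) = y0], on (0,1],
   when [F] is bounded and Lipschitz in [y] on each strip [d,1] x R: the Picard
   iterates of [y(t) = y0 - int_t^1 F(s, y(s)) ds] converge, in the weighted norm
   [sup exp(-2L(1-t)) |y(t)|], at geometric rate 1/2 on every [d,1]. *)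
Section BackwardCauchy.

Variable F : R -> R -> R.
Hypothesis F_cont : forall (Y : R -> R) s, 0 < s -> continuous Y s ->
  continuous (fun x => F x (Y x)) s.
Hypothesis F_strip : forall d, 0 < d <= 1 ->
  exists M L, 0 <= M /\ 0 < L /\ strip_bound F d M L.
Variable y0 : R.

Fixpoint picard (n : nat) : R -> R :=
  match n with
  | O => fun _ => y0
  | S m => fun t => y0 - RInt (fun s => F s (picard m s)) t 1
  end.

Lemma picard_cont n t : 0 < t -> continuous (picard n) t.
Proof.
  revert t; induction n as [| n IH]; intros t Ht; cbn [picard].
  - apply continuous_const.
  - apply continuous_Rminus; [apply continuous_const |].
    apply (ex_derive_continuous (fun a => RInt (fun s => F s (picard n s)) a 1)).
    eexists. apply RInt_lower_derive; auto.
Qed.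

Lemma F_picard_cont n x : 0 < x -> continuous (fun s => F s (picard n s)) x.
Proof. intros Hx. apply F_cont, picard_cont; auto. Qed.

(* The limit is read at [min t 1], so that it is constant on [1, +oo). *)
Definition picard_limit (t : R) : R := Lim_seq (fun n => picard n (Rmin t 1)).

Section Strip.

Variables d M L : R.
Hypothesis Hd : 0 < d <= 1.
Hypothesis HM : 0 <= M.
Hypothesis HL : 0 < L.
Hypothesis HB : strip_bound F d M L.

(* The iterates are [M]-Lipschitz on [d,1]: their derivatives are values of [F]. *)
Lemma picard_lipschitz n s t : d <= s <= 1 -> d <= t <= 1 ->
  Rabs (picard n s - picard n t) <= M * Rabs (s - t).
Proof.
  intros Hs Ht. destruct n as [| n]; cbn [picard].
  - rewrite Rminus_diag, Rabs_R0. pose proof (Rabs_pos (s - t)). nra.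
  - replace (y0 - RInt (fun x => F x (picard n x)) s 1 - (y0 - RInt (fun x => F x (picard n x)) t 1))
      with (- (RInt (fun x => F x (picard n x)) s 1 - RInt (fun x => F x (picard n x)) t 1))
      by ring.
    rewrite Rabs_Ropp, RInt_lower_diff, (Rabs_minus_sym s t); try lra;
      [| intros; apply F_picard_cont; auto].
    apply RInt_abs_bound; try lra; [intros; apply F_picard_cont; auto |].
    intros x [Hx1 Hx2]. refine (proj1 (HB x _ _ (picard n x))). split.
    + apply Rle_trans with (Rmin s t); auto. apply Rmin_glb; lra.
    + apply Rle_trans with (Rmax s t); auto. apply Rmax_lub; lra.
Qed.

Lemma picard_step n t : d <= t <= 1 ->
  Rabs (picard (S n) t - picard n t) <= M * exp (2 * L * (1 - t)) * (/ 2) ^ n.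
Proof.
  revert t; induction n as [| n IH]; intros t Ht.
  - cbn [picard]. replace (y0 - RInt (fun s => F s y0) t 1 - y0)
      with (- RInt (fun s => F s y0) t 1) by ring.
    rewrite Rabs_Ropp. eapply Rle_trans.
    + apply RInt_abs_bound; try lra; [intros; apply F_cont, continuous_const; auto |].
      intros x Hx. rewrite Rmin_left, Rmax_right in Hx by lra. apply (HB x ltac:(lra) y0 y0).
    + pose proof (exp_ineq1_le (2 * L * (1 - t))).
      assert (1 - t <= exp (2 * L * (1 - t))) by nra.
      rewrite Rabs_right by lra. simpl. nra.
  - set (Fn := fun s => F s (picard n s)).
    set (Fn1 := fun s => F s (picard (S n) s)).
    assert (E : picard (S (S n)) t - picard (S n) t = RInt (fun s => Fn s - Fn1 s) t 1).
    { change (picard (S (S n)) t) with (y0 - RInt Fn1 t 1).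
      change (picard (S n) t) with (y0 - RInt Fn t 1).
      rewrite <- RInt_Rminus; [ring | | | lra]; intros; apply F_picard_cont; auto. }
    set (K := M * (/ 2) ^ S n).
    assert (HK : 0 <= K) by (apply Rmult_le_pos; auto; apply pow_le; lra).
    assert (CF : forall x, 0 < x -> continuous (fun s => Fn s - Fn1 s) x).
    { intros x Hx. apply continuous_Rminus; apply F_picard_cont; auto. }
    rewrite E. eapply Rle_trans; [apply abs_RInt_le; [lra | apply ex_RInt_pos; auto; lra] |].
    eapply Rle_trans.
    { apply (RInt_le _ (fun s => 2 * L * K * exp (2 * L * (1 - s)))); [lra | | |].
      - apply ex_RInt_pos; try lra. intros x Hx. apply continuous_Rabs_comp, CF; auto.
      - apply ex_RInt_pos; try lra. intros x _. apply continuous_exp_weight.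
      - intros x Hx. unfold Fn, Fn1. eapply Rle_trans; [apply (HB x ltac:(lra)) |].
        rewrite Rabs_minus_sym. specialize (IH x ltac:(lra)).
        unfold K. simpl pow. pose proof (half_pow_pos n). nra. }
    rewrite RInt_exp_weight. pose proof (exp_pos (2 * L * (1 - t))). unfold K in *. nra.
Qed.

Lemma picard_cauchy k n t : d <= t <= 1 ->
  Rabs (picard (k + n) t - picard n t) <=
    2 * (M * exp (2 * L * (1 - t))) * ((/ 2) ^ n - (/ 2) ^ (k + n)).
Proof.
  intros Ht. induction k as [| k IH].
  - simpl. rewrite Rminus_diag, Rabs_R0. lra.
  - change (S k + n)%nat with (S (k + n)).
    pose proof (picard_step (k + n) t Ht) as Hstep.
    replace (picard (S (k + n)) t - picard n t) with
      ((picard (S (k + n)) t - picard (k + n) t) + (picard (k + n) t - picard n t)) by ring.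
    eapply Rle_trans; [apply Rabs_triang |]. simpl pow. lra.
Qed.

Lemma picard_converges t : d <= t <= 1 ->
  is_lim_seq (fun n => picard n t) (picard_limit t) /\
  forall n, Rabs (picard_limit t - picard n t) <= 2 * (M * exp (2 * L * (1 - t))) * (/ 2) ^ n.
Proof.
  intros Ht. set (C := M * exp (2 * L * (1 - t))).
  assert (HC0 : 0 <= C) by (unfold C; pose proof (exp_pos (2 * L * (1 - t))); nra).
  assert (HC : forall k n, Rabs (picard (k + n) t - picard n t) <= 2 * C * (/ 2) ^ n).
  { intros k n. eapply Rle_trans; [apply picard_cauchy; auto |].
    pose proof (half_pow_pos (k + n)). fold C. nra. }
  assert (Hlim : is_lim_seq (fun n => picard n t) (picard_limit t)).
  { unfold picard_limit. rewrite Rmin_left by lra.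
    apply Lim_seq_correct', ex_lim_seq_cauchy_corr. intros eps.
    assert (Heps : 0 < eps / (2 * C + 1)) by (apply Rdiv_lt_0_compat; [apply cond_pos | lra]).
    destruct (pow_lt_1_zero (/ 2) ltac:(rewrite Rabs_right; lra) _ Heps) as [N HN].
    assert (HNb : forall j, (j >= N)%nat -> 2 * C * (/ 2) ^ j < eps).
    { intros j Hj. specialize (HN j Hj). rewrite Rabs_right in HN by (left; apply half_pow_pos).
      pose proof (cond_pos eps). pose proof (half_pow_pos j).
      apply Rmult_lt_compat_r with (r := 2 * C + 1) in HN; [| lra].
      unfold Rdiv in HN. rewrite Rmult_assoc, Rinv_l in HN by lra. nra. }
    exists N. intros n m Hn Hm. destruct (Nat.le_ge_cases n m) as [Hnm | Hnm].
    - destruct (Nat.le_exists_sub n m Hnm) as [k [-> _]].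
      rewrite Rabs_minus_sym. eapply Rle_lt_trans; [apply HC | apply HNb; auto].
    - destruct (Nat.le_exists_sub m n Hnm) as [k [-> _]].
      eapply Rle_lt_trans; [apply HC | apply HNb; auto]. }
  split; auto. intros n.
  assert (Hdiff : is_lim_seq (fun k => Rabs (picard (k + n) t - picard n t))
                    (Rabs (picard_limit t - picard n t))).
  { apply (is_lim_seq_abs _ (Finite (picard_limit t - picard n t))).
    apply (is_lim_seq_minus' _ (fun _ => picard n t)); [| apply is_lim_seq_const].
    apply (is_lim_seq_incr_n (fun k => picard k t) n). auto. }
  exact (is_lim_seq_le _ _ _ _ (fun k => HC k n) Hdiff (is_lim_seq_const _)).
Qed.

(* The limit inherits the Lipschitz bound; through [min t 1] it extends to [d, +oo). *)
Lemma picard_limit_lipschitz a b : d <= a -> d <= b ->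
  Rabs (picard_limit a - picard_limit b) <= M * Rabs (a - b).
Proof.
  intros Ha Hb.
  assert (Hclamp : forall x, picard_limit (Rmin x 1) = picard_limit x).
  { intros x. unfold picard_limit. f_equal. apply Lim_seq_ext. intros n. f_equal.
    unfold Rmin at 1. destruct Rle_dec; auto. unfold Rmin in *; destruct Rle_dec; lra. }
  rewrite <- (Hclamp a), <- (Hclamp b).
  assert (Ha' : d <= Rmin a 1 <= 1) by (split; [apply Rmin_glb; lra | apply Rmin_r]).
  assert (Hb' : d <= Rmin b 1 <= 1) by (split; [apply Rmin_glb; lra | apply Rmin_r]).
  destruct (picard_converges _ Ha') as [Ca _]. destruct (picard_converges _ Hb') as [Cb _].
  pose proof (is_lim_seq_abs _ _ (is_lim_seq_minus' _ _ _ _ Ca Cb)) as Hdiff.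
  pose proof (is_lim_seq_le _ _ _ _ (fun n => picard_lipschitz n _ _ Ha' Hb') Hdiff
                (is_lim_seq_const _)) as Hle.
  eapply Rle_trans; [exact Hle |]. apply Rmult_le_compat_l; auto. apply Rmin_lipschitz.
Qed.

End Strip.

Lemma picard_limit_cont t : 0 < t -> continuous picard_limit t.
Proof.
  intros Ht. set (d := Rmin (t / 2) 1).
  assert (Hd : 0 < d <= 1) by (split; [apply Rmin_glb_lt; lra | apply Rmin_r]).
  destruct (F_strip d Hd) as (M & L & HM & HL & HB).
  apply (lipschitz_continuous _ d M); auto.
  - pose proof (Rmin_l (t / 2) 1). fold d in H. lra.
  - intros a b Ha Hb. apply (picard_limit_lipschitz d M L); auto.
Qed.

Lemma F_limit_cont x : 0 < x -> continuous (fun s => F s (picard_limit s)) x.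
Proof. intros Hx. apply F_cont, picard_limit_cont; auto. Qed.

Lemma picard_limit_integral t : 0 < t <= 1 ->
  picard_limit t = y0 - RInt (fun s => F s (picard_limit s)) t 1.
Proof.
  intros Ht. destruct (F_strip t Ht) as (M & L & HM & HL & HB).
  destruct (picard_converges t M L Ht HM HL HB t ltac:(lra)) as [Hc _].
  set (C := M * exp (2 * L * (1 - t))).
  assert (Hg : is_lim_seq (fun n => picard (S n) t)
                 (y0 - RInt (fun s => F s (picard_limit s)) t 1)).
  { apply (is_lim_seq_geometric_error _ _ ((1 - t) * (L * (2 * C)))). intros n. cbn [picard].
    replace (y0 - RInt (fun s => F s (picard n s)) t 1 -
               (y0 - RInt (fun s => F s (picard_limit s)) t 1))
      with (RInt (fun s => F s (picard_limit s)) t 1 - RInt (fun s => F s (picard n s)) t 1)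
      by ring.
    rewrite RInt_Rminus; try lra;
      [| intros; apply F_limit_cont; auto | intros; apply F_picard_cont; auto].
    eapply Rle_trans.
    - apply (RInt_abs_bound _ (L * (2 * C * (/ 2) ^ n))); try lra.
      { intros x Hx. apply continuous_Rminus; [apply F_limit_cont | apply F_picard_cont]; auto. }
      intros x Hx. rewrite Rmin_left, Rmax_right in Hx by lra.
      eapply Rle_trans; [apply (HB x ltac:(lra)) |]. apply Rmult_le_compat_l; [lra |].
      destruct (picard_converges t M L Ht HM HL HB x ltac:(lra)) as [_ Herr].
      eapply Rle_trans; [apply Herr |].
      assert (exp (2 * L * (1 - x)) <= exp (2 * L * (1 - t))).
      { destruct (Rle_lt_or_eq_dec (2 * L * (1 - x)) (2 * L * (1 - t))) as [Hlt | Heq];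
          [nra | left; apply exp_increasing, Hlt | rewrite Heq; lra]. }
      pose proof (half_pow_pos n). unfold C.
      apply Rmult_le_compat_r; [lra |]. apply Rmult_le_compat_l; [lra |].
      apply Rmult_le_compat_l; [lra | assumption].
    - rewrite Rabs_right by lra. right; ring. }
  apply is_lim_seq_incr_1 in Hc.
  pose proof (is_lim_seq_unique _ _ Hc) as U. rewrite (is_lim_seq_unique _ _ Hg) in U.
  injection U. auto.
Qed.

Lemma picard_limit_derive t : 0 < t < 1 ->
  is_derive picard_limit t (F t (picard_limit t)).
Proof.
  intros Ht.
  apply (is_derive_ext_loc (fun x => y0 - RInt (fun s => F s (picard_limit s)) x 1)).
  { apply filter_imp with (fun x => 0 < x < 1); [| apply locally_interval; lra].
    intros x Hx. symmetry. apply picard_limit_integral. lra. }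
  pose proof (RInt_lower_derive _ t F_limit_cont ltac:(lra)) as D1.
  pose proof (is_derive_minus (fun _ => y0) _ t _ _ (is_derive_const y0 t) D1) as D2.
  simpl in D2. change (minus ?x ?y) with (x - y) in D2. change zero with 0 in D2.
  replace (F t (picard_limit t)) with (0 - - F t (picard_limit t)) by ring. exact D2.
Qed.

Theorem backward_cauchy : exists y : R -> R,
  (forall t, 0 < t -> continuous y t) /\
  (forall t, 0 < t < 1 -> is_derive y t (F t (y t))) /\ y 1 = y0.
Proof.
  exists picard_limit. split; [| split].
  - apply picard_limit_cont.
  - apply picard_limit_derive.
  - rewrite picard_limit_integral by lra. rewrite RInt_point. change zero with 0. ring.
Qed.

End BackwardCauchy.

Definition left_continuous (g : R -> R) (b : R) : Prop :=
  forall eps, 0 < eps -> exists eta, 0 < eta /\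
    forall x, b - eta < x <= b -> Rabs (g x - g b) < eps.

Lemma cont_on_01_left_continuous (g : R -> R) : cont_on_01 g -> left_continuous g 1.
Proof.
  intros Hg eps He.
  destruct (proj1 (within_eps g _ 1 (g 1)) (Hg 1 ltac:(lra)) eps He) as [del [Hdel Hs]].
  exists (Rmin del 1). split; [apply Rmin_glb_lt; lra |].
  intros x Hx. pose proof (Rmin_l del 1). pose proof (Rmin_r del 1).
  apply Hs; [lra |]. rewrite Rabs_left1; lra.
Qed.

Lemma continuous_left_continuous (g : R -> R) b : continuous g b -> left_continuous g b.
Proof.
  intros Hg eps He. destruct (continuous_eps g b Hg eps He) as [del [Hdel Hs]].
  exists del. split; auto. intros x Hx. apply Hs. rewrite Rabs_left1; lra.
Qed.

Lemma left_continuous_minus (f g : R -> R) b : left_continuous f b -> left_continuous g b ->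
  left_continuous (fun x => f x - g x) b.
Proof.
  intros Hf Hg eps He.
  destruct (Hf (eps / 2) ltac:(lra)) as [e1 [He1 H1]].
  destruct (Hg (eps / 2) ltac:(lra)) as [e2 [He2 H2]].
  exists (Rmin e1 e2). split; [apply Rmin_glb_lt; auto |].
  intros x Hx. pose proof (Rmin_l e1 e2). pose proof (Rmin_r e1 e2).
  specialize (H1 x ltac:(lra)). specialize (H2 x ltac:(lra)).
  apply Rabs_lt_between in H1. apply Rabs_lt_between in H2. apply Rabs_lt_between. lra.
Qed.

Lemma nondecreasing_of_derive (g dg : R -> R) s x : s <= x ->
  (forall y, s <= y <= x -> is_derive g y (dg y) /\ 0 <= dg y) -> g s <= g x.
Proof.
  intros Hsx Hd. destruct (Req_dec s x) as [-> | Hne]; [lra |].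
  destruct (MVT_gen g s x dg) as [c0 [Hc0 Heq]].
  - intros y Hy. rewrite Rmin_left, Rmax_right in Hy by lra. apply Hd; lra.
  - intros y Hy. rewrite Rmin_left, Rmax_right in Hy by lra.
    apply continuity_pt_filterlim, (ex_derive_continuous g). exists (dg y). apply Hd; lra.
  - rewrite Rmin_left, Rmax_right in Hc0 by lra.
    assert (0 <= dg c0) by (apply Hd; lra).
    assert (0 <= dg c0 * (x - s)) by (apply Rmult_le_pos; lra). lra.
Qed.

(* Proof: let [s] be the last
   point of [a,b] where [g >= g a]; by left-continuity at [b], [s < b]; by
   continuity [g s >= g a > 0], so [g] keeps increasing right after [s]. *)
Lemma comparison_principle (g dg : R -> R) a b : a < b -> 0 < g a ->
  (forall x, a <= x < b -> is_derive g x (dg x)) ->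
  (forall x, a <= x < b -> 0 < g x -> 0 <= dg x) ->
  left_continuous g b -> g a <= g b.
Proof.
  intros Hab Hga Hder Hsign Hlc.
  destruct (Rle_dec (g a) (g b)) as [| Hlt]; auto. exfalso. set (m := g a) in *.
  assert (Hcont : forall x, a <= x < b -> continuous g x).
  { intros x Hx. apply (ex_derive_continuous g). exists (dg x). auto. }
  destruct (Hlc (m - g b) ltac:(lra)) as [eta [Heta Hnear]].
  set (T := fun x => a <= x <= b /\ m <= g x).
  assert (Hbd : bound T) by (exists b; intros x [Hx _]; lra).
  assert (Ta : T a) by (split; unfold m; lra).
  destruct (completeness T Hbd (ex_intro _ a Ta)) as [s [Hub Hlub]].
  assert (Has : a <= s) by (apply Hub, Ta).
  assert (Hsb : s <= b - eta).
  { apply Hlub. intros x [Hx Hgx]. destruct (Rle_dec x (b - eta)) as [| Hfar]; auto.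
    specialize (Hnear x ltac:(lra)). apply Rabs_lt_between in Hnear. lra. }
  assert (Hgs : m <= g s).
  { destruct (Rle_dec m (g s)) as [| Hgs]; auto. exfalso.
    destruct (continuous_eps g s (Hcont s ltac:(lra)) (m - g s) ltac:(lra)) as [del [Hdel Hs]].
    assert (s <= s - del); [| lra].
    apply Hlub. intros x [Hx Hgx]. destruct (Rle_dec x (s - del)) as [| Hfar]; auto.
    assert (x <= s) by (apply Hub; split; auto).
    specialize (Hs x). rewrite Rabs_left1 in Hs by lra. specialize (Hs ltac:(lra)).
    apply Rabs_lt_between in Hs. lra. }
  destruct (continuous_eps g s (Hcont s ltac:(lra)) (g s) ltac:(lra)) as [del [Hdel Hs]].
  pose proof (Rmin_l (s + del / 2) ((s + b) / 2)). pose proof (Rmin_r (s + del / 2) ((s + b) / 2)).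
  set (x1 := Rmin (s + del / 2) ((s + b) / 2)) in *.
  assert (Hx1 : s < x1) by (unfold x1, Rmin; destruct Rle_dec; lra).
  assert (Hgx1 : g s <= g x1).
  { apply (nondecreasing_of_derive g dg); [lra |]. intros y Hy.
    split; [apply Hder; lra |]. apply Hsign; [lra |].
    specialize (Hs y). rewrite Rabs_right in Hs by lra. specialize (Hs ltac:(lra)).
    apply Rabs_lt_between in Hs. lra. }
  assert (x1 <= s) by (apply Hub; split; [lra |]; lra). lra.
Qed.

(* The right-hand side of (P_c) with [z] replaced by [min(z, u)], for continuous
   data on R with [u < 0] on (0, +oo) and [q >= 0].  Since [min(v, u s) <= u s < 0],
   it is bounded and Lipschitz in [v] on every strip [d,1] x R. *)
Section TruncatedRHS.

Variables (hc qc uc : R -> R) (c : R).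
Hypothesis hc_cont : forall x, continuous hc x.
Hypothesis qc_cont : forall x, continuous qc x.
Hypothesis uc_cont : forall x, continuous uc x.
Hypothesis uc_neg : forall s, 0 < s -> uc s < 0.
Hypothesis qc_nonneg : forall s, 0 <= qc s.

Definition trunc_rhs (s v : R) : R := hc s - c - qc s / Rmin v (uc s).

Lemma trunc_rhs_cont (Y : R -> R) s : 0 < s -> continuous Y s ->
  continuous (fun x => trunc_rhs x (Y x)) s.
Proof.
  intros Hs HY. unfold trunc_rhs.
  apply continuous_Rminus; [apply continuous_Rminus; auto; apply continuous_const |].
  apply continuous_Rdiv; auto; [apply continuous_Rmin; auto |].
  pose proof (Rmin_r (Y s) (uc s)). pose proof (uc_neg s Hs). lra.
Qed.

(* Bounds on a strip: [|hc| <= H], [0 <= qc <= Q] and [min(v, uc) <= U < 0] on [d,1]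
   give the bound [H + |c| + Q/|U|] and the Lipschitz constant [Q/U^2 (+1)]. *)
Lemma trunc_rhs_strip d : 0 < d <= 1 ->
  exists M L, 0 <= M /\ 0 < L /\ strip_bound trunc_rhs d M L.
Proof.
  intros Hd.
  assert (Hpt : forall g : R -> R, (forall x, continuous g x) ->
            forall x, d <= x <= 1 -> continuity_pt g x).
  { intros g Hg x _. apply continuity_pt_filterlim, Hg. }
  destruct (continuity_ab_maj (fun s => Rabs (hc s)) d 1 ltac:(lra)
              (Hpt _ (fun x => continuous_Rabs_comp _ _ (hc_cont x)))) as [sH [HH _]].
  destruct (continuity_ab_maj qc d 1 ltac:(lra) (Hpt _ qc_cont)) as [sQ [HQ _]].
  destruct (continuity_ab_maj uc d 1 ltac:(lra) (Hpt _ uc_cont)) as [sU [HU HsU]].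
  set (H := Rabs (hc sH)). set (Q := qc sQ). set (U := uc sU).
  assert (HU0 : U < 0) by (apply uc_neg; lra).
  assert (HQ0 : 0 <= Q) by apply qc_nonneg.
  assert (HQU : 0 <= Q / - U) by (apply Rmult_le_pos; [lra | left; apply Rinv_0_lt_compat; lra]).
  assert (HQUU : 0 <= Q / (U * U))
    by (apply Rmult_le_pos; [lra | left; apply Rinv_0_lt_compat; nra]).
  exists (H + Rabs c + Q / - U), (Q / (U * U) + 1).
  split; [pose proof (Rabs_pos c); pose proof (Rabs_pos (hc sH)); unfold H; lra |].
  split; [lra |]. intros s Hs v w.
  assert (Hm : forall v, Rmin v (uc s) <= U).
  { intros v'. pose proof (Rmin_r v' (uc s)). specialize (HU s Hs). unfold U. lra. }
  assert (Hq : 0 <= qc s <= Q) by (split; [apply qc_nonneg | apply HQ; auto]).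
  unfold trunc_rhs. split.
  - assert (Rabs (qc s / Rmin v (uc s)) <= Q / - U).
    { specialize (Hm v). rewrite Rabs_div, Rabs_right, Rabs_left by lra.
      unfold Rdiv. apply Rmult_le_compat; try lra.
      - left; apply Rinv_0_lt_compat; lra.
      - apply Rinv_le_contravar; lra. }
    specialize (HH s Hs). fold H in HH.
    unfold Rminus. eapply Rle_trans; [apply Rabs_triang |]. rewrite Rabs_Ropp.
    eapply Rle_trans; [apply Rplus_le_compat_r, Rabs_triang |]. rewrite Rabs_Ropp. lra.
  - set (mv := Rmin v (uc s)). set (mw := Rmin w (uc s)).
    assert (Hmv : mv <= U) by apply Hm. assert (Hmw : mw <= U) by apply Hm.
    replace (hc s - c - qc s / mv - (hc s - c - qc s / mw)) with (qc s * (mv - mw) / (mv * mw))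
      by (field; split; lra).
    rewrite Rabs_div, Rabs_mult, (Rabs_right (qc s)), (Rabs_right (mv * mw)) by nra.
    assert (Hprod : U * U <= mv * mw) by nra.
    assert (Hlip : Rabs (mv - mw) <= Rabs (v - w)) by apply Rmin_lipschitz.
    apply Rle_trans with (Q * Rabs (v - w) / (U * U)).
    + unfold Rdiv. apply Rmult_le_compat.
      * apply Rmult_le_pos; [lra | apply Rabs_pos].
      * left; apply Rinv_0_lt_compat; nra.
      * apply Rmult_le_compat; lra || apply Rabs_pos.
      * apply Rinv_le_contravar; nra.
    + unfold Rdiv. rewrite Rmult_assoc, (Rmult_comm (Rabs (v - w))), <- Rmult_assoc.
      apply Rmult_le_compat_r; [apply Rabs_pos |]. fold (Q / (U * U)). lra.
Qed.

End TruncatedRHS.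

Definition vanishes_at_0 (g : R -> R) : Prop :=
  forall eps, 0 < eps -> exists del, 0 < del /\ forall t, 0 < t < del -> Rabs (g t) < eps.

Lemma cont_on_01_vanishes (g : R -> R) : cont_on_01 g -> g 0 = 0 -> vanishes_at_0 g.
Proof.
  intros Hg Hg0 eps He.
  destruct (proj1 (within_eps g _ 0 (g 0)) (Hg 0 ltac:(lra)) eps He) as [del [Hdel Hs]].
  exists (Rmin del 1). split; [apply Rmin_glb_lt; lra |].
  intros t Ht. pose proof (Rmin_l del 1). pose proof (Rmin_r del 1).
  rewrite <- (Rminus_0_r (g t)), <- Hg0. apply Hs; [lra |]. rewrite Rminus_0_r, Rabs_right; lra.
Qed.

Lemma vanishes_sub_linear (z : R -> R) k : vanishes_at_0 z -> vanishes_at_0 (fun t => z t - k * t).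
Proof.
  intros Hz eps He. destruct (Hz (eps / 2) ltac:(lra)) as [del [Hdel Hs]].
  assert (Hk : 0 < eps / 2 / (Rabs k + 1))
    by (apply Rdiv_lt_0_compat; [lra | pose proof (Rabs_pos k); lra]).
  exists (Rmin del (eps / 2 / (Rabs k + 1))). split; [apply Rmin_glb_lt; auto |].
  intros t Ht. pose proof (Rmin_l del (eps / 2 / (Rabs k + 1))).
  pose proof (Rmin_r del (eps / 2 / (Rabs k + 1))).
  specialize (Hs t ltac:(lra)).
  assert (Hkt : Rabs k * t < eps / 2).
  { assert (t * (Rabs k + 1) < eps / 2).
    { apply Rmult_lt_reg_r with (/ (Rabs k + 1)); [apply Rinv_0_lt_compat; pose proof (Rabs_pos k); lra |].
      rewrite Rmult_assoc, Rinv_r by (pose proof (Rabs_pos k); lra). lra. }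
    pose proof (Rabs_pos k). nra. }
  unfold Rminus. eapply Rle_lt_trans; [apply Rabs_triang |].
  rewrite Rabs_Ropp, Rabs_mult, (Rabs_right t) by lra. lra.
Qed.

Lemma vanishes_squeeze (w y u : R -> R) : vanishes_at_0 w -> vanishes_at_0 u ->
  (forall t, 0 < t < 1 -> w t <= y t <= u t) -> vanishes_at_0 y.
Proof.
  intros Hw Hu Hwyu eps He.
  destruct (Hw eps He) as [d1 [Hd1 H1]]. destruct (Hu eps He) as [d2 [Hd2 H2]].
  exists (Rmin 1 (Rmin d1 d2)). split; [repeat apply Rmin_glb_lt; lra |].
  intros t Ht. pose proof (Rmin_l 1 (Rmin d1 d2)). pose proof (Rmin_r 1 (Rmin d1 d2)).
  pose proof (Rmin_l d1 d2). pose proof (Rmin_r d1 d2).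
  specialize (H1 t ltac:(lra)). specialize (H2 t ltac:(lra)). specialize (Hwyu t ltac:(lra)).
  apply Rabs_lt_between in H1. apply Rabs_lt_between in H2. apply Rabs_lt_between. lra.
Qed.

Definition zext (y : R -> R) (x : R) : R := if Rle_dec x 0 then 0 else y x.

Lemma zext_locally (y : R -> R) x : 0 < x -> locally x (fun t => y t = zext y t).
Proof.
  intros Hx. apply filter_imp with (fun t => 0 < t < x + 1); [| apply locally_interval; lra].
  intros t Ht. unfold zext. destruct Rle_dec; [lra | auto].
Qed.

Lemma solution_of_vanishing (h q : R -> R) c (y Dy : R -> R) :
  (forall t, 0 < t -> continuous y t) ->
  (forall t, 0 < t < 1 -> is_derive y t (Dy t)) ->
  (forall t, 0 < t < 1 -> continuous Dy t) ->
  (forall t, 0 < t < 1 -> Dy t = h t - c - q t / y t) ->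
  (forall t, 0 < t < 1 -> y t < 0) -> vanishes_at_0 y ->
  exists z, sol_P h q c z /\ z 1 = y 1.
Proof.
  intros Hyc HyD HDc HDeq Hneg Hvan.
  exists (zext y). split; [| unfold zext; destruct Rle_dec; [lra | auto]].
  assert (HD : forall x, 0 < x < 1 -> is_derive (zext y) x (Dy x)).
  { intros x Hx. apply (is_derive_ext_loc y); [apply zext_locally; lra | auto]. }
  split; [| split; [| split; [| split]]].
  - intros x Hx. apply within_eps. intros eps He. destruct (Req_dec x 0) as [-> | Hx0].
    + destruct (Hvan eps He) as [del [Hdel Hs]]. exists del. split; auto.
      intros s Ds Hsd. unfold zext. destruct Rle_dec as [| Hs0]; destruct Rle_dec; try lra.
      * rewrite Rminus_diag, Rabs_R0; lra.
      * rewrite Rminus_0_r. apply Hs. rewrite Rminus_0_r, Rabs_right in Hsd; lra.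
    + assert (Hc : continuous (zext y) x).
      { apply (continuous_ext_loc _ y); [apply zext_locally | apply Hyc]; lra. }
      destruct (continuous_eps _ x Hc eps He) as [d [Hd Hs]]. exists d. split; auto.
  - intros x Hx. split; [exists (Dy x); apply HD; auto |].
    apply (continuous_ext_loc _ Dy); [| apply HDc; auto].
    apply filter_imp with (fun t => 0 < t < 1); [| apply locally_interval; auto].
    intros t Ht. symmetry. apply is_derive_unique, HD, Ht.
  - intros x Hx. rewrite (is_derive_unique _ _ _ (HD x Hx)), HDeq by auto.
    unfold zext. destruct Rle_dec; [lra | auto].
  - intros x Hx. unfold zext. destruct Rle_dec; [lra | auto].
  - unfold zext. destruct Rle_dec; lra.
Qed.

(* Upper barrier: a backward trajectory of the truncated equation that ends
   below the solution [u] of (P_c) stays below it, because where [y > u] the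
   truncation makes [y] and [u] solve the same equation. *)
Lemma upper_barrier (h q u y : R -> R) c : sol_P h q c u ->
  (forall x, 0 < x < 1 -> is_derive y x (h x - c - q x / Rmin (y x) (u x))) ->
  continuous y 1 -> y 1 <= u 1 ->
  forall t, 0 < t <= 1 -> y t <= u t.
Proof.
  intros (Uc & Ud & Ue & _ & _) Hy Hy1 Hend t Ht.
  destruct (Rle_dec (y t) (u t)) as [| Hgt]; auto. exfalso.
  destruct (Req_dec t 1) as [-> | Ht1]; [lra |].
  assert (y t - u t <= y 1 - u 1); [| lra].
  apply (comparison_principle (fun x => y x - u x)
           (fun x => (h x - c - q x / Rmin (y x) (u x)) - Derive u x)); try lra.
  - intros x Hx. apply is_derive_Rminus; [apply Hy; lra | apply Derive_correct, Ud; lra].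
  - intros x Hx Hpos. rewrite Ue, Rmin_right by lra. lra.
  - apply left_continuous_minus;
      [apply continuous_left_continuous, Hy1 | apply cont_on_01_left_continuous, Uc].
Qed.

(* Lower barrier: if [z] solves (P_c), [c <= c'], then [w = z - (c' - c) x] is a
   subsolution for any equation [y' = h - c' - q/m] with [m <= y], [m < 0]:
   where [w > y] we have [z >= w > y >= m], hence [w' - y' = q (z - m)/(m z) >= 0]. *)
Lemma lower_barrier (h q z y m : R -> R) c c' : sol_P h q c z -> c <= c' ->
  (forall x, 0 < x < 1 -> 0 <= q x) ->
  (forall x, 0 < x < 1 -> is_derive y x (h x - c' - q x / m x)) ->
  (forall x, 0 < x < 1 -> m x <= y x /\ m x < 0) ->
  continuous y 1 -> z 1 - (c' - c) <= y 1 ->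
  forall t, 0 < t <= 1 -> z t - (c' - c) * t <= y t.
Proof.
  intros (Zc & Zd & Ze & Zn & _) Hcc Hq Hy Hm Hy1 Hend t Ht.
  destruct (Rle_dec (z t - (c' - c) * t) (y t)) as [| Hgt]; auto. exfalso.
  destruct (Req_dec t 1) as [-> | Ht1]; [lra |].
  assert (z t - (c' - c) * t - y t <= z 1 - (c' - c) * 1 - y 1); [| lra].
  apply (comparison_principle (fun x => z x - (c' - c) * x - y x)
           (fun x => Derive z x - (c' - c) - (h x - c' - q x / m x))); try lra.
  - intros x Hx. apply is_derive_Rminus; [| apply Hy; lra].
    apply (is_derive_Rminus z (fun x => (c' - c) * x)); [apply Derive_correct, Zd; lra |].
    auto_derive; auto. ring.
  - intros x Hx Hpos. rewrite Ze by lra.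
    destruct (Hm x ltac:(lra)) as [Hmy Hm0]. specialize (Zn x ltac:(lra)).
    assert (Hzm : m x <= z x) by nra.
    replace (h x - c - q x / z x - (c' - c) - (h x - c' - q x / m x))
      with (q x * (z x - m x) * / (m x * z x)) by (field; lra).
    apply Rmult_le_pos; [apply Rmult_le_pos; [apply Hq | ]; lra |].
    left; apply Rinv_0_lt_compat; nra.
  - apply left_continuous_minus; [apply left_continuous_minus |].
    + apply cont_on_01_left_continuous, Zc.
    + apply continuous_left_continuous, continuous_Rmult;
        [apply continuous_const | apply continuous_id].
    + apply continuous_left_continuous, Hy1.
Qed.

(* It is obtained by integrating the truncated
   equation backwards from [y0]; the two barriers trap it between
   [z - (c' - c) x] and [u], so the truncation is inactive and it vanishes at 0. *)
Lemma solution_between (h q z u : R -> R) c c' y0 :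
  cont_on_01 h -> cont_on_01 q -> (forall x, 0 <= x <= 1 -> 0 <= q x) -> c <= c' ->
  sol_P h q c z -> sol_P h q c' u -> u 1 < 0 -> z 1 - (c' - c) <= y0 <= u 1 ->
  exists v, sol_P h q c' v /\ v 1 = y0.
Proof.
  intros Hh Hq Hqnn Hcc Hz Hu Hu1 Hy0.
  pose proof Hz as (Zc & _ & _ & _ & Z0). pose proof Hu as (Uc & _ & _ & Un & U0).
  set (hc := fun s => h (clamp01 s)). set (qc := fun s => q (clamp01 s)).
  set (uc := fun s => u (clamp01 s)).
  assert (Hhc : forall x, continuous hc x) by apply (cont_on_01_clamp h Hh).
  assert (Hqc : forall x, continuous qc x) by apply (cont_on_01_clamp q Hq).
  assert (Huc : forall x, continuous uc x) by apply (cont_on_01_clamp u Uc).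
  assert (Huc_neg : forall s, 0 < s -> uc s < 0).
  { intros s Hs. unfold uc. pose proof (clamp01_range s). pose proof (clamp01_pos s Hs).
    destruct (Req_dec (clamp01 s) 1) as [-> | Hne]; [lra | apply Un; lra]. }
  assert (Hqc_nonneg : forall s, 0 <= qc s) by (intros s; apply Hqnn, clamp01_range).
  assert (F_cont := trunc_rhs_cont hc qc uc c' Hhc Hqc Huc Huc_neg).
  destruct (backward_cauchy (trunc_rhs hc qc uc c') F_cont
              (trunc_rhs_strip hc qc uc c' Hhc Hqc Huc Huc_neg Hqc_nonneg) y0)
    as [y (Hyc & HyD & Hy1)].
  assert (Hrhs : forall x, 0 < x < 1 ->
            trunc_rhs hc qc uc c' x (y x) = h x - c' - q x / Rmin (y x) (u x)).
  { intros x Hx. unfold trunc_rhs, hc, qc, uc. rewrite clamp01_id by lra. reflexivity. }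
  assert (HyD' : forall x, 0 < x < 1 -> is_derive y x (h x - c' - q x / Rmin (y x) (u x)))
    by (intros x Hx; rewrite <- Hrhs by auto; apply HyD, Hx).
  assert (Hup := upper_barrier h q u y c' Hu HyD' (Hyc 1 ltac:(lra)) ltac:(lra)).
  assert (Hlow := lower_barrier h q z y (fun x => Rmin (y x) (u x)) c c' Hz Hcc
                    (fun x Hx => Hqnn x ltac:(lra)) HyD'
                    (fun x Hx => conj (Rmin_l _ _)
                                      (Rle_lt_trans _ _ _ (Rmin_r _ _) (Un x Hx)))
                    (Hyc 1 ltac:(lra)) ltac:(lra)).
  rewrite <- Hy1. apply (solution_of_vanishing h q c' y (fun t => trunc_rhs hc qc uc c' t (y t))).
  - exact Hyc.
  - exact HyD.
  - intros t Ht. apply F_cont, Hyc; lra.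
  - intros t Ht. rewrite Hrhs, Rmin_left by (try apply Hup; lra). reflexivity.
  - intros t Ht. specialize (Hup t ltac:(lra)). specialize (Un t Ht). lra.
  - apply (vanishes_squeeze (fun t => z t - (c' - c) * t) y u).
    + apply vanishes_sub_linear, cont_on_01_vanishes; auto.
    + apply cont_on_01_vanishes; auto.
    + intros t Ht. split; [apply Hlow | apply Hup]; lra.
Qed.

Lemma beta_drop (h q : R -> R) cstar (beta : R -> R) :
  cont_on_01 h -> cont_on_01 q -> (forall x, 0 <= x <= 1 -> 0 <= q x) ->
  (forall c, c > cstar ->
     beta c < 0 /\
     (forall b, b < 0 -> ((exists z, sol_P h q c z /\ z 1 = b) <-> b >= beta c))) ->
  forall c c', cstar < c -> c < c' -> beta c' <= beta c - (c' - c).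
Proof.
  intros Hh Hq Hqnn Hbeta c c' Hc Hcc.
  destruct (Hbeta c ltac:(lra)) as [Hbc Hsol]. destruct (Hbeta c' ltac:(lra)) as [Hbc' Hsol'].
  destruct (Rle_dec (beta c') (beta c - (c' - c))) as [| Hlt]; auto.
  destruct (proj2 (Hsol (beta c) Hbc) ltac:(lra)) as [z [Hz Hz1]].
  destruct (proj2 (Hsol' (beta c') Hbc') ltac:(lra)) as [u [Hu Hu1]].
  destruct (solution_between h q z u c c' (beta c - (c' - c)) Hh Hq Hqnn ltac:(lra) Hz Hu
              ltac:(lra) ltac:(lra)) as [v Hv].
  pose proof (proj1 (Hsol' (beta c - (c' - c)) ltac:(lra)) (ex_intro _ v Hv)). lra.
Qed.

Lemma cond_q_nonneg (q : R -> R) : cond_q q -> forall x, 0 <= x <= 1 -> 0 <= q x.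
Proof.
  intros (_ & Hpos & Hq0 & Hq1 & _) x Hx.
  destruct (Req_dec x 0) as [-> | H0]; [lra |]. destruct (Req_dec x 1) as [-> | H1]; [lra |].
  left; apply Hpos; lra.
Qed.

Theorem corollary5p3 (f h q : R -> R) (cstar : R) (beta : R -> R)
  (Hf : C1_01 f h) (Hf0 : f 0 = 0) (Hq : cond_q q)
  (Hcstar : forall c, (exists z, sol_P00 h q c z) <-> c >= cstar)
  (Hbeta : forall c, c > cstar ->
     beta c < 0 /\
     (forall b, b < 0 -> ((exists z, sol_P h q c z /\ z 1 = b) <-> b >= beta c))) :
  (forall c1 c2, cstar < c1 -> c1 < c2 -> beta c2 < beta c1) /\
  is_lim beta p_infty m_infty.
Proof.
  assert (Hdrop := beta_drop h q cstar beta (proj2 Hf) (proj1 Hq) (cond_q_nonneg q Hq) Hbeta).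
  split.
  - intros c1 c2 H1 H2. specialize (Hdrop c1 c2 H1 H2). lra.
  - (* beyond [c0 = cstar + 1], [beta c <= beta c0 - (c - c0)]. *)
    intros P [M HM]. set (c0 := cstar + 1).
    exists (Rmax c0 (c0 + beta c0 - M)). intros c Hc. apply HM.
    pose proof (Rmax_l c0 (c0 + beta c0 - M)). pose proof (Rmax_r c0 (c0 + beta c0 - M)).
    specialize (Hdrop c0 c ltac:(unfold c0; lra) ltac:(lra)). lra.
Qed.
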